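(* Consider $N$ players $\mathcal{N}=\{1,\dots,N\}$. Player $i$ has decision variable $x_i\in\mathcal{X}_i\subset\mathbb{R}^{m_i}$, $m:=\sum_i m_i$, $\mathcal{X}:=\prod_i\mathcal{X}_i$, and differentiable objective $J_i:\mathbb{R}^m\to\mathbb{R}$. For each ordered pair $i\neq j$ let $\Theta_{i,j}\subseteq\mathbb{R}^d$, $\Theta:=\prod_{i\neq j}\Theta_{i,j}$, and let $\gamma_i^j:\mathcal{X}_i\times\Theta_{i,j}\to\mathcal{X}_j$ be differentiable in $x_i$; write $\theta_i=(\theta_{i,j})_{j\neq i}$, $\gamma_i^{-i}(x_i;\theta_i)=(\gamma_i^j(x_i;\theta_{i,j}))_{j\neq i}$. Let $\mathscr{F}:\mathcal{X}\to\mathbb{R}$, and let $(x^*,\theta^* )$ be a solution of $$\min_{\theta\in\Theta,\,x\in\mathcal{X}}\ \mathscr{F}(x)\quad\text{s.t.}\quad \nabla_i J_i(x_i,\gamma_i^{-i}(x_i;\theta_i))+\nabla_{-i}J_i(x_i,\gamma_i^{-i}(x_i;\theta_i))^\top\nabla_i\gamma_i^{-i}(x_i;\theta_i)=0\ \forall i,\qquad \gamma_i^j(x_i;\theta_{i,j})=x_j\ \forall i\neq j.$$ Assume that for each player $i$, the conjectured objective $x_i\mapsto J_i(x_i,\gamma_i^{-i}(x_i;\theta_i^* ))$ is pseudo-convex on $\mathcal{X}_i$. Then $x^*$ is an equilibrium of the game in which each player $i$ independently solves $\min_{x_i}J_i(x_i,\gamma_i^{-i}(x_i;\theta_i^* ))$;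 that is, for every $i$, $x_i^*$ is a global minimizer of $x_i\mapsto J_i(x_i,\gamma_i^{-i}(x_i;\theta_i^* ))$, so the equilibrium $x^N(\theta^* )$ of this game coincides with $x^*$.
   Context: A differentiable function $f:\mathcal{Y}\subseteq\mathbb{R}^k\to\mathbb{R}$ is pseudo-convex if for all $a,b\in\mathcal{Y}$, $\nabla f(a)^\top(b-a)\ge 0$ implies $f(b)\ge f(a)$. $\nabla_i$ denotes the partial derivative with respect to $x_i$, and $\nabla_{-i}J_i$ the stack of partial derivatives of $J_i$ with respect to $x_j$, $j\neq i$. *)

From HB Require Import structures.
From mathcomp Require Import all_boot all_order all_algebra.
From mathcomp Require Import all_classical all_reals.
From mathcomp Require Import topology normedtype derive.
Unset Printing Implicit Defensive.
Import Order.TTheory GRing.Theory Num.Theory.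
Import numFieldNormedType.Exports.
Local Open Scope classical_set_scope.
Local Open Scope ring_scope.

(* A joint profile x in R^m, m = sum_i m_i, is a row vector of size
   \sum_(j < N) m j; player j's block is x_j := blk x j. *)
Definition blk {R : realType} {N : nat} {m : 'I_N -> nat}
  (x : 'rV[R]_(\sum_(j < N) m j)) (j : 'I_N) : 'rV[R]_(m j) := submxrow x j.

Definition upd {R : realType} {N : nat} {m : 'I_N -> nat}
  (x : 'rV[R]_(\sum_(j < N) m j)) (i : 'I_N) (v : 'rV[R]_(m i))
  : 'rV[R]_(\sum_(j < N) m j) :=
  \mxrow_(j < N) (match i =P j with
                  | ReflectT e => ecast k 'rV[R]_(m k) e v
                  | ReflectF _ => blk x j end).

Definition emb {R : realType} {N : nat} {m : 'I_N -> nat}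
  (i : 'I_N) (v : 'rV[R]_(m i)) : 'rV[R]_(\sum_(j < N) m j) := upd 0 i v.

(* Partial derivative of f w.r.t. block j at x, applied to a direction v:
   nabla_j f(x)^T v. *)
Definition pd {R : realType} {N : nat} {m : 'I_N -> nat}
  (f : 'rV[R]_(\sum_(j < N) m j) -> R) (x : 'rV[R]_(\sum_(j < N) m j))
  (j : 'I_N) (v : 'rV[R]_(m j)) : R := 'd f x (emb j v).

Definition prof {R : realType} {N : nat} {m : 'I_N -> nat} {d : nat}
  (gam : forall i j : 'I_N, 'rV[R]_(m i) -> 'rV[R]_d -> 'rV[R]_(m j))
  (th : 'I_N -> 'I_N -> 'rV[R]_d) (i : 'I_N) (xi : 'rV[R]_(m i))
  : 'rV[R]_(\sum_(j < N) m j) :=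
  \mxrow_(j < N) (match i =P j with
                  | ReflectT e => ecast k 'rV[R]_(m k) e xi
                  | ReflectF _ => gam i j xi (th i j) end).

Definition pseudo_convex {R : realType} {k : nat} (Y : set 'rV[R]_k)
  (f : 'rV[R]_k -> R) : Prop :=
  (forall a, Y a -> differentiable f a) /\
  (forall a b, Y a -> Y b -> 0 <= 'd f a (b - a) -> f a <= f b).

(* Stationarity constraint of player i:
   nabla_i J_i + (nabla_{-i} J_i)^T nabla_i gamma_i^{-i} = 0,
   tested against every direction v of R^{m_i}. *)
Definition stationary {R : realType} {N : nat} {m : 'I_N -> nat} {d : nat}
  (J : 'I_N -> 'rV[R]_(\sum_(j < N) m j) -> R)
  (gam : forall i j : 'I_N, 'rV[R]_(m i) -> 'rV[R]_d -> 'rV[R]_(m j))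
  (x : 'rV[R]_(\sum_(j < N) m j)) (th : 'I_N -> 'I_N -> 'rV[R]_d)
  (i : 'I_N) : Prop :=
  let p := prof gam th i (blk x i) in
  forall v : 'rV[R]_(m i),
    pd (J i) p i v
    + \sum_(j < N | j != i)
        pd (J i) p j ('d (fun y => gam i j y (th i j)) (blk x i) v) = 0.

Definition feasible {R : realType} {N : nat} {m : 'I_N -> nat} {d : nat}
  (X : forall i : 'I_N, set 'rV[R]_(m i))
  (Theta : 'I_N -> 'I_N -> set 'rV[R]_d)
  (J : 'I_N -> 'rV[R]_(\sum_(j < N) m j) -> R)
  (gam : forall i j : 'I_N, 'rV[R]_(m i) -> 'rV[R]_d -> 'rV[R]_(m j))
  (x : 'rV[R]_(\sum_(j < N) m j)) (th : 'I_N -> 'I_N -> 'rV[R]_d) : Prop :=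
  [/\ (forall i, X i (blk x i)),
      (forall i j, i != j -> Theta i j (th i j)),
      (forall i, stationary J gam x th i) &
      (forall i j, i != j -> gam i j (blk x i) (th i j) = blk x j)].

(** At a feasible point, the stationarity
    constraint of player [i] says precisely that the derivative of its conjectured
    objective [y |-> J i (prof gam ths i y)] vanishes at [blk xs i]: writing the
    conjectured profile as [emb i y + sum_(j != i) emb j (gam i j y (ths i j))],
    the chain rule turns that derivative into the left-hand side of the
    constraint.
    A pseudo-convex function is globally minimized wherever its derivative
    vanishes, so [blk xs i] is a best response to the conjectures. *)

From HB Require Import structures.
From mathcomp Require Import all_boot all_order all_algebra.
From mathcomp Require Import all_classical all_reals.
From mathcomp Require Import topology normedtype derive.
Import Order.TTheory GRing.Theory Num.Theory.
Import numFieldNormedType.Exports.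
Local Open Scope classical_set_scope.
Local Open Scope ring_scope.

Lemma is_diff_sum (R : numFieldType) (V W : normedModType R) (I : Type)
    (r : seq I) (P : pred I) (f df : I -> V -> W) (x : V) :
  (forall i, P i -> is_diff x (f i) (df i)) ->
  is_diff x (fun y => \sum_(i <- r | P i) f i y)
            (fun v => \sum_(i <- r | P i) df i v).
Proof.
move=> dfP; rewrite -!fct_sumE.
by elim/big_ind2: _ => // [|F G dF dG]; [exact: is_diff_cst | exact: is_diffD].
Qed.

Lemma pseudo_convex_stationary_min {R : realType} {k : nat} {Y : set 'rV[R]_k}
    {f : 'rV[R]_k -> R} {a : 'rV[R]_k} :
  pseudo_convex Y f -> Y a -> (forall v, 'd f a v = 0) ->
  forall b, Y b -> f a <= f b.
Proof. by move=> [_ pcf] Ya dfa0 b Yb; apply: pcf => //; rewrite dfa0. Qed.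

Section BlockEmbedding.
Context {R : realType} {N : nat} {m : 'I_N -> nat}.

Lemma emb_is_linear (j : 'I_N) : linear (@emb R N m j).
Proof.
move=> a u v; apply/matrixP => r k; rewrite /emb /upd /mxrow !mxE.
move: (tagnat.sig2 k); move: (tagnat.sig1 k) => j' l.
case: (j =P j') => [e|ne]; first by subst j'; rewrite !mxE.
by rewrite /blk submxrow0 !mxE mulr0 addr0.
Qed.

HB.instance Definition _ (j : 'I_N) :=
  GRing.isLinear.Build R _ _ _ (@emb R N m j) (emb_is_linear j).

Lemma emb_continuous (j : 'I_N) : continuous (@emb R N m j).
Proof.
move=> u A /nbhs_ballP[e /= e0 eA].
apply/nbhs_ballP; exists e => //= v [_ uv]; apply: eA; split => // r k.
rewrite /emb /upd /mxrow !mxE.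
move: (tagnat.sig2 k); move: (tagnat.sig1 k) => j' l.
case: (j =P j') => [e'|ne]; first by subst j'; exact: uv.
exact: ballxx.
Qed.

Lemma is_diff_emb (j : 'I_N) (x : 'rV[R]_(m j)) : is_diff x (emb j) (emb j).
Proof.
apply: DiffDef; first exact: linear_differentiable (emb_continuous j).
exact: diff_lin (emb_continuous j).
Qed.

Lemma blk_emb (j : 'I_N) (v : 'rV[R]_(m j)) : blk (emb j v) j = v.
Proof.
rewrite /blk /emb /upd mxrowK.
by case: (j =P j) => [e|//]; rewrite (eq_irrelevance e erefl).
Qed.

Lemma blk_emb_neq (j k : 'I_N) (v : 'rV[R]_(m j)) : j != k -> blk (emb j v) k = 0.
Proof.
move=> jk; rewrite /blk /emb /upd mxrowK.
by case: (j =P k) => [e|_]; [rewrite e eqxx in jk | exact: submxrow0].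
Qed.

Lemma prof_sum_emb {d : nat}
    (gam : forall i j : 'I_N, 'rV[R]_(m i) -> 'rV[R]_d -> 'rV[R]_(m j))
    (th : 'I_N -> 'I_N -> 'rV[R]_d) (i : 'I_N) (y : 'rV[R]_(m i)) :
  prof gam th i y = emb i y + \sum_(j < N | j != i) emb j (gam i j y (th i j)).
Proof.
apply/mxrowP => k; rewrite mxrowK submxrowD -/(blk _ k) submxrow_sum.
under eq_bigr do rewrite -/(blk _ k).
case: (i =P k) => [ik|/eqP ik].
  subst k; rewrite /= blk_emb big1 ?addr0 // => j ji.
  by rewrite blk_emb_neq.
rewrite blk_emb_neq // add0r (bigD1 k) 1?eq_sym //= blk_emb big1 ?addr0 //.
by move=> j /andP[_ jk]; rewrite blk_emb_neq.
Qed.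

End BlockEmbedding.

Section ConjecturedObjective.
Context {R : realType} {N : nat} {m : 'I_N -> nat} {d : nat}.
Context {gam : forall i j : 'I_N, 'rV[R]_(m i) -> 'rV[R]_d -> 'rV[R]_(m j)}.
Context {th : 'I_N -> 'I_N -> 'rV[R]_d} {i : 'I_N} {a : 'rV[R]_(m i)}.
Hypothesis dgam :
  forall j, j != i -> differentiable (fun y => gam i j y (th i j)) a.

Lemma is_diff_prof : is_diff a (prof gam th i) (fun v =>
  emb i v + \sum_(j < N | j != i) emb j ('d (fun y => gam i j y (th i j)) a v)).
Proof.
rewrite (funext (prof_sum_emb gam th i)).
apply: (is_diffD (f := emb i)); first exact: is_diff_emb.
apply: is_diff_sum => j ji.
exact: is_diff_comp (differentiableP (dgam _ ji)) (is_diff_emb j _).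
Qed.

Lemma diff_conjectured_objective (J : 'rV[R]_(\sum_(j < N) m j) -> R)
    (v : 'rV[R]_(m i)) :
  differentiable J (prof gam th i a) ->
  'd (J \o prof gam th i) a v =
    pd J (prof gam th i a) i v
    + \sum_(j < N | j != i)
        pd J (prof gam th i a) j ('d (fun y => gam i j y (th i j)) a v).
Proof.
move=> dJ; have [dprof dprofE] := is_diff_prof.
by rewrite diff_comp // dprofE /= linearD linear_sum.
Qed.

End ConjecturedObjective.

Theorem theorem2 (R : realType) (N : nat) (m : 'I_N -> nat) (d : nat)
  (X : forall i : 'I_N, set 'rV[R]_(m i))
  (Theta : 'I_N -> 'I_N -> set 'rV[R]_d)
  (J : 'I_N -> 'rV[R]_(\sum_(j < N) m j) -> R)
  (gam : forall i j : 'I_N, 'rV[R]_(m i) -> 'rV[R]_d -> 'rV[R]_(m j))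
  (F : 'rV[R]_(\sum_(j < N) m j) -> R)
  (xs : 'rV[R]_(\sum_(j < N) m j)) (ths : 'I_N -> 'I_N -> 'rV[R]_d) :
  (forall i x, differentiable (J i) x) ->
  (forall i j, i != j -> forall xi th, X i xi -> Theta i j th ->
     differentiable (fun y => gam i j y th) xi) ->
  feasible X Theta J gam xs ths ->
  (forall x th, feasible X Theta J gam x th -> F xs <= F x) ->
  (forall i, pseudo_convex (X i) (fun y => J i (prof gam ths i y))) ->
  forall i (y : 'rV[R]_(m i)), X i y ->
    J i (prof gam ths i (blk xs i)) <= J i (prof gam ths i y).
Proof.
(* Only stationarity is used: neither the optimality of [(xs, ths)] for [F]
   nor the consistency constraints [gam i j (blk xs i) (ths i j) = blk xs j]. *)
move=> dJ dgam [Xs Ths Sts _] _ pc i y Xy.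
apply: (pseudo_convex_stationary_min (pc i) (Xs i) _ y Xy) => v.
have dgam_i j :
    j != i -> differentiable (fun z => gam i j z (ths i j)) (blk xs i).
  by move=> ji; apply: dgam (Xs i) (Ths i j _); rewrite eq_sym.
by rewrite (diff_conjectured_objective dgam_i); [exact: Sts | exact: dJ].
Qed.
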